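(* Let $l\ge3$ be an integer and $x_1,\dots,x_l$ pairwise distinct real numbers, and set $a_{m,n}=\frac{1}{x_m-x_n}$ for $m\ne n$. Denoting by $\mathcal{S}_l$ the set of permutations of $\{1,\dots,l\}$, $$\sum_{\sigma\in\mathcal{S}_l} a_{\sigma(1),\sigma(2)}\,a_{\sigma(2),\sigma(3)}\cdots a_{\sigma(l-1),\sigma(l)}\,a_{\sigma(l),\sigma(1)}=0.$$ *)

From HB Require Import structures.
From mathcomp Require Import all_boot all_order all_algebra all_fingroup.
Set Implicit Arguments. Unset Strict Implicit. Unset Printing Implicit Defensive.
Import Order.TTheory GRing.Theory Num.Theory.
Local Open Scope ring_scope.

Definition acoef (R : fieldType) (l : nat) (x : 'I_l -> R) (m n : 'I_l) : R :=
  (x m - x n)^-1.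

(* cyclic successor on 'I_l : i |-> i+1 mod l (so the last index wraps to 0) *)
Definition cyc_succ (l : nat) (i : 'I_l) : 'I_l := ordS i.

From HB Require Import structures.
From mathcomp Require Import all_boot all_order all_algebra all_fingroup.
From mathcomp Require Import ring zify.
Import Order.TTheory GRing.Theory Num.Theory.
Local Open Scope ring_scope.

(* Write a permutation s as the sequence y_0, ..., y_{k+1} of the values
   x_{s(0)}, ..., x_{s(k+1)}; its term is the cyclic product of
   b(u, v) = 1/(u - v) around y_0 -> y_1 -> ... -> y_{k+1} -> y_0.
   The partial fraction identity
       b(u, v) b(v, w) = b(u, w) (b(u, v) + b(v, w))
   removes the vertex y_0 from the cycle:
       C(y_0, ..., y_{k+1}) = C(y_1, ..., y_{k+1}) (b(y_{k+1}, y_0) + b(y_0, y_1)).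
   Composing s with the permutation that fixes 0 and rotates 1, ..., k+1
   turns y into y_0, y_2, ..., y_{k+1}, y_1: the reduced cycle is only
   rotated, hence unchanged, while b(y_{k+1}, y_0) becomes b(y_1, y_0)
   = - b(y_0, y_1).  Reindexing the first half of the sum by this bijection
   of the symmetric group therefore cancels it against the second half. *)

Section CyclicProducts.
Variable R : fieldType.
Implicit Types (u v w : R) (y z : nat -> R).

Definition inv_diff u v : R := (u - v)^-1.

Lemma inv_diffC u v : inv_diff v u = - inv_diff u v.
Proof. by rewrite /inv_diff -invrN opprB. Qed.

Lemma inv_diff_partial u v w : u != v -> v != w -> u != w ->
  inv_diff u v * inv_diff v w = inv_diff u w * (inv_diff u v + inv_diff v w).
Proof.
rewrite -[u == v]subr_eq0 -[v == w]subr_eq0 -[u == w]subr_eq0 => huv hvw huw.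
by rewrite /inv_diff; field; rewrite huv hvw huw.
Qed.

Definition path_prod y k : R := \prod_(i < k) inv_diff (y i) (y i.+1).

Definition cycle_prod y k : R := path_prod y k * inv_diff (y k) (y 0%N).

Lemma cycle_prod_ordS k (f : 'I_k.+1 -> R) :
  \prod_(i < k.+1) inv_diff (f i) (f (ordS i)) = cycle_prod (fun j => f (inord j)) k.
Proof.
set g := fun j => f (inord j).
have termE (i : 'I_k.+1) : inv_diff (f i) (f (ordS i)) = inv_diff (g i) (g (i.+1 %% k.+1)%N).
  rewrite /g inord_val; congr (inv_diff _ (f _)).
  by apply: val_inj; rewrite /= inordK // ltn_pmod.
rewrite (eq_bigr _ (fun i _ => termE i)) big_ord_recr /= modnn.
by congr (_ * _); apply: eq_bigr => i _; rewrite modn_small // ltnS.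
Qed.

Lemma cycle_prod_rot y z k : (0 < k)%N ->
  (forall j, (j < k)%N -> z j = y j.+1) -> z k = y 0%N ->
  cycle_prod z k = cycle_prod y k.
Proof.
case: k => // k _ zE zk; rewrite /cycle_prod /path_prod.
rewrite [in LHS]big_ord_recr [in RHS]big_ord_recl /=.
have shiftE (i : 'I_k) : inv_diff (z i) (z i.+1) = inv_diff (y i.+1) (y i.+2).
  by have hi := ltn_ord i; rewrite !zE //; lia.
rewrite (eq_bigr _ (fun i _ => shiftE i)) zk !zE //; ring.
Qed.

Lemma cycle_prod_remove y k :
  y k.+1 != y 0%N -> y 0%N != y 1%N -> y k.+1 != y 1%N ->
  cycle_prod y k.+1 =
  cycle_prod (fun j => y j.+1) k * (inv_diff (y k.+1) (y 0%N) + inv_diff (y 0%N) (y 1%N)).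
Proof.
move=> h1 h2 h3; rewrite /cycle_prod /path_prod big_ord_recl /=.
by rewrite -[RHS]mulrA -(inv_diff_partial _ _ _ h1 h2 h3); ring.
Qed.

End CyclicProducts.
Arguments inv_diff {R}.
Arguments cycle_prod {R}.

Definition rot_tail (k j : nat) : nat :=
  if j == 0%N then 0%N else if j == k.+1 then 1%N else j.+1.

Lemma rot_tail_mid k j : (0 < j <= k)%N -> rot_tail k j = j.+1.
Proof. by rewrite /rot_tail; case: (j =P 0%N); case: (j =P k.+1); lia. Qed.

Lemma rot_tail_lt k j : (j < k.+2)%N -> (rot_tail k j < k.+2)%N.
Proof. by rewrite /rot_tail; case: eqP => // _; case: eqP; lia. Qed.

Lemma rot_tail_inj k : injective (rot_tail k).
Proof.
move=> a b; rewrite /rot_tail.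
by case: (a =P 0%N); case: (a =P k.+1); case: (b =P 0%N); case: (b =P k.+1); lia.
Qed.

Definition rot_tail_ord k (i : 'I_k.+2) : 'I_k.+2 := inord (rot_tail k i).

Lemma rot_tail_ord_inj k : injective (@rot_tail_ord k).
Proof.
move=> i j /(congr1 val); rewrite /= !inordK ?rot_tail_lt //.
by move/rot_tail_inj/val_inj.
Qed.

Definition rot_tail_perm k : 'S_k.+2 := perm (@rot_tail_ord_inj k).

Lemma rot_tail_permE k j : (j < k.+2)%N ->
  rot_tail_perm k (inord j) = inord (rot_tail k j).
Proof. by move=> hj; rewrite permE /rot_tail_ord inordK. Qed.

Theorem lemma4 (R : realFieldType) (l : nat) (hl : (3 <= l)%N)
  (x : 'I_l -> R) (hx : injective x) :
  \sum_(s : 'S_l) \prod_(i < l) acoef x (s i) (s (cyc_succ i)) = 0.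
Proof.
case: l hl x hx => [|[|k]] // k_gt0 x hx.
pose y (s : 'S_k.+2) j := x (s (inord j)).
have y_neq s i j : (i < k.+2)%N -> (j < k.+2)%N -> i != j -> y s i != y s j.
  move=> hi hj; apply: contra => /eqP /hx /perm_inj /(congr1 val).
  by rewrite /= !inordK // => ->.
have termE (s : 'S_k.+2) : \prod_(i < k.+2) acoef x (s i) (s (cyc_succ i)) =
    cycle_prod (fun j => y s j.+1) k *
    (inv_diff (y s k.+1) (y s 0%N) + inv_diff (y s 0%N) (y s 1%N)).
  by rewrite (cycle_prod_ordS _ _ (x \o s)) cycle_prod_remove ?y_neq //; lia.
set p := rot_tail_perm k.
have y_rot s j : (j < k.+2)%N -> y (p * s)%g j = y s (rot_tail k j).
  by move=> hj; rewrite /y permM rot_tail_permE.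
have reduced_rot s :
    cycle_prod (fun j => y (p * s)%g j.+1) k = cycle_prod (fun j => y s j.+1) k.
  apply: cycle_prod_rot => [|j hj|]; first by lia.
    by rewrite y_rot ?rot_tail_mid //; lia.
  by rewrite y_rot // /rot_tail eqxx.
under eq_bigr do rewrite termE mulrDr.
rewrite big_split /= (reindex_inj (mulgI p)) -big_split /=.
apply: big1 => s _; rewrite reduced_rot !y_rot // /rot_tail /= eqxx inv_diffC.
by rewrite -mulrDr addNr mulr0.
Qed.
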